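(* (1) If $v$ is a valuation over $\mathcal M_{\bf Tm}$, then the functions $v_1:For\to A_{\bf Dm}$ and $v_2:For\to A_{\bf Km}$ given by $v_1(\alpha)=v_2(\alpha)=v(\alpha)$ for every formula $\alpha$ are valuations over $\mathcal M_{\bf Dm}$ and $\mathcal M_{\bf Km}$, respectively. (2) If $v$ is a valuation over $\mathcal M_{\bf Dm}$, then the function $v_1:For\to A_{\bf Km}$ given by $v_1(\alpha)=v(\alpha)$ for every formula $\alpha$ is a valuation over $\mathcal M_{\bf Km}$.
   Context: Formulas are built from a denumerable set of propositional variables by the unary connectives $\neg$, $\Box$ and the binary connective $\to$; $For$ is the set of all formulas. An Nmatrix has a domain $A$, designated values $D\subseteq A$ and, for each connective, a multioperation giving nonempty subsets of $A$; a valuation over it is $v:For\to A$ with $v(\neg\alpha)\in\tilde\neg(v(\alpha))$, $v(\Box\alpha)\in\tilde\Box(v(\alpha))$, $v(\alpha\to\beta)\in v(\alpha)\tilde\to v(\beta)$. $\mathcal M_{\bf Km}$: domain $A_{\bf Km}=\{T^+,C^+,F^+,I^+,T^-,C^-,F^-,I^-\}$, designated $\{T^+,C^+,F^+,I^+\}$. Negation: $\tilde\neg T^+=\{F^-\}$, $\tilde\neg C^+=\{C^-\}$, $\tilde\neg F^+=\{T^-\}$, $\tilde\neg I^+=\{I^-\}$, $\tilde\neg T^-=\{F^+\}$, $\tilde\neg C^-=\{C^+\}$, $\tilde\neg F^-=\{T^+\}$, $\tilde\neg I^-=\{I^+\}$. $\tilde\Box x=\{T^+,C^+,F^+,I^+\}$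 if $x\in\{T^+,T^-,I^+,I^-\}$ and $\tilde\Box x=\{T^-,C^-,F^-,I^-\}$ otherwise. Implication (row $x$, column $y$): $$\begin{array}{c|cccccccc} \to & T^+ & C^+ & F^+ & I^+ & T^- & C^- & F^- & I^-\\\hline T^+ & \{T^+\}&\{C^+\}&\{F^+\}&\{I^+\}&\{T^-\}&\{C^-\}&\{F^-\}&\{I^-\}\\ C^+ & \{T^+\}&\{T^+,C^+\}&\{C^+\}&\{I^+\}&\{T^-\}&\{T^-,C^-\}&\{C^-\}&\{I^-\}\\ F^+ & \{T^+\}&\{T^+\}&\{T^+\}&\{I^+\}&\{T^-\}&\{T^-\}&\{T^-\}&\{I^-\}\\ I^+ & \{I^+\}&\{I^+\}&\{I^+\}&\{I^+\}&\{I^-\}&\{I^-\}&\{I^-\}&\{I^-\}\\ T^- & \{T^+\}&\{C^+\}&\{F^+\}&\{I^+\}&\{T^+\}&\{C^+\}&\{F^+\}&\{I^+\}\\ C^- & \{T^+\}&\{T^+,C^+\}&\{C^+\}&\{I^+\}&\{T^+\}&\{T^+,C^+\}&\{C^+\}&\{I^+\}\\ F^- & \{T^+\}&\{T^+\}&\{T^+\}&\{I^+\}&\{T^+\}&\{T^+\}&\{T^+\}&\{I^+\}\\ I^- & \{I^+\}&\{I^+\}&\{I^+\}&\{I^+\}&\{I^+\}&\{I^+\}&\{I^+\}&\{I^+\}\end{array}$$ $\mathcal M_{\bf Dm}$: domain $A_{\bf Dm}=\{T^+,C^+,F^+,T^-,C^-,F^-\}$, designated $\{T^+,C^+,F^+\}$;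 negation and implication are the restrictions of those of $\mathcal M_{\bf Km}$ to this domain; $\tilde\Box x=\{T^+,C^+,F^+\}$ if $x\in\{T^+,T^-\}$ and $\tilde\Box x=\{T^-,C^-,F^-\}$ otherwise. $\mathcal M_{\bf Tm}$: domain $A_{\bf Tm}=\{T^+,C^+,C^-,F^-\}$, designated $\{T^+,C^+\}$; $\tilde\neg T^+=\{F^-\}$, $\tilde\neg C^+=\{C^-\}$, $\tilde\neg C^-=\{C^+\}$, $\tilde\neg F^-=\{T^+\}$; $x\tilde\to y$ is the intersection of the corresponding $\mathcal M_{\bf Km}$ entry with $A_{\bf Tm}$; $\tilde\Box T^+=\{T^+,C^+\}$ and $\tilde\Box x=\{C^-,F^-\}$ for $x\neq T^+$. *)

From Stdlib Require Import List.

Inductive For : Type :=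
| Var : nat -> For
| Neg : For -> For
| Box : For -> For
| Imp : For -> For -> For.

(* The 8 truth values of A_Km; the smaller domains are subsets of it. *)
Inductive V8 : Type := Tp | Cp | Fp | Ip | Tm | Cm | Fm | Im.

Record Nmatrix : Type := {
  dom : V8 -> Prop;
  designated : V8 -> Prop;
  mneg : V8 -> V8 -> Prop;         (* mneg x y  <->  y \in ~neg x *)
  mbox : V8 -> V8 -> Prop;         (* mbox x y  <->  y \in ~box x *)
  mimp : V8 -> V8 -> V8 -> Prop    (* mimp x y z <-> z \in x ~-> y *)
}.

Definition valuation (M : Nmatrix) (v : For -> V8) : Prop :=
  (forall a, dom M (v a)) /\
  (forall a, mneg M (v a) (v (Neg a))) /\
  (forall a, mbox M (v a) (v (Box a))) /\
  (forall a b, mimp M (v a) (v b) (v (Imp a b))).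

Definition domKm (x : V8) : Prop := True.
Definition desKm (x : V8) : Prop := x = Tp \/ x = Cp \/ x = Fp \/ x = Ip.

Definition negKm (x : V8) : V8 :=
  match x with
  | Tp => Fm | Cp => Cm | Fp => Tm | Ip => Im
  | Tm => Fp | Cm => Cp | Fm => Tp | Im => Ip
  end.

Definition posV (x : V8) : Prop := x = Tp \/ x = Cp \/ x = Fp \/ x = Ip.
Definition negV (x : V8) : Prop := x = Tm \/ x = Cm \/ x = Fm \/ x = Im.

Definition boxKm (x y : V8) : Prop :=
  match x with
  | Tp | Tm | Ip | Im => posV y
  | _ => negV y
  end.

Definition impKm_list (x y : V8) : list V8 :=
  match x, y with
  | Tp, Tp => Tp :: nil | Tp, Cp => Cp :: nil | Tp, Fp => Fp :: nil | Tp, Ip => Ip :: nil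
  | Tp, Tm => Tm :: nil | Tp, Cm => Cm :: nil | Tp, Fm => Fm :: nil | Tp, Im => Im :: nil
  | Cp, Tp => Tp :: nil | Cp, Cp => Tp :: Cp :: nil | Cp, Fp => Cp :: nil | Cp, Ip => Ip :: nil
  | Cp, Tm => Tm :: nil | Cp, Cm => Tm :: Cm :: nil | Cp, Fm => Cm :: nil | Cp, Im => Im :: nil
  | Fp, Tp => Tp :: nil | Fp, Cp => Tp :: nil | Fp, Fp => Tp :: nil | Fp, Ip => Ip :: nil
  | Fp, Tm => Tm :: nil | Fp, Cm => Tm :: nil | Fp, Fm => Tm :: nil | Fp, Im => Im :: nil
  | Ip, Tp => Ip :: nil | Ip, Cp => Ip :: nil | Ip, Fp => Ip :: nil | Ip, Ip => Ip :: nil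
  | Ip, Tm => Im :: nil | Ip, Cm => Im :: nil | Ip, Fm => Im :: nil | Ip, Im => Im :: nil
  | Tm, Tp => Tp :: nil | Tm, Cp => Cp :: nil | Tm, Fp => Fp :: nil | Tm, Ip => Ip :: nil
  | Tm, Tm => Tp :: nil | Tm, Cm => Cp :: nil | Tm, Fm => Fp :: nil | Tm, Im => Ip :: nil
  | Cm, Tp => Tp :: nil | Cm, Cp => Tp :: Cp :: nil | Cm, Fp => Cp :: nil | Cm, Ip => Ip :: nil
  | Cm, Tm => Tp :: nil | Cm, Cm => Tp :: Cp :: nil | Cm, Fm => Cp :: nil | Cm, Im => Ip :: nil
  | Fm, Tp => Tp :: nil | Fm, Cp => Tp :: nil | Fm, Fp => Tp :: nil | Fm, Ip => Ip :: nil
  | Fm, Tm => Tp :: nil | Fm, Cm => Tp :: nil | Fm, Fm => Tp :: nil | Fm, Im => Ip :: nil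
  | Im, _ => Ip :: nil
  end.

Definition impKm (x y z : V8) : Prop := In z (impKm_list x y).

Definition M_Km : Nmatrix :=
  {| dom := domKm; designated := desKm;
     mneg := fun x y => y = negKm x; mbox := boxKm; mimp := impKm |}.

Definition domDm (x : V8) : Prop := x = Tp \/ x = Cp \/ x = Fp \/ x = Tm \/ x = Cm \/ x = Fm.
Definition desDm (x : V8) : Prop := x = Tp \/ x = Cp \/ x = Fp.

Definition boxDm (x y : V8) : Prop :=
  match x with
  | Tp | Tm => y = Tp \/ y = Cp \/ y = Fp
  | _ => y = Tm \/ y = Cm \/ y = Fm
  end.

Definition M_Dm : Nmatrix :=
  {| dom := domDm; designated := desDm;
     mneg := fun x y => y = negKm x; mbox := boxDm; mimp := impKm |}.

Definition domTm (x : V8) : Prop := x = Tp \/ x = Cp \/ x = Cm \/ x = Fm.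
Definition desTm (x : V8) : Prop := x = Tp \/ x = Cp.

Definition boxTm (x y : V8) : Prop :=
  match x with
  | Tp => y = Tp \/ y = Cp
  | _ => y = Cm \/ y = Fm
  end.

Definition impTm (x y z : V8) : Prop := impKm x y z /\ domTm z.

Definition M_Tm : Nmatrix :=
  {| dom := domTm; designated := desTm;
     mneg := fun x y => y = negKm x; mbox := boxTm; mimp := impTm |}.

(* Each matrix is obtained from the next larger one by shrinking the domain and
   the sets of admissible values, so any legal assignment over the smaller
   matrix is already legal over the larger one. *)

(* Avron's refinement of Nmatrices, without the condition on designated values,
   which valuations do not see. *)
Definition refines (M N : Nmatrix) : Prop :=
  (forall x, dom M x -> dom N x) /\
  (forall x y, dom M x -> mneg M x y -> mneg N x y) /\
  (forall x y, dom M x -> mbox M x y -> mbox N x y) /\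
  (forall x y z, dom M x -> dom M y -> mimp M x y z -> mimp N x y z).

Lemma refines_trans {M N P : Nmatrix} : refines M N -> refines N P -> refines M P.
Proof.
  intros [HdMN [HnMN [HbMN HiMN]]] [HdNP [HnNP [HbNP HiNP]]].
  repeat split; intros; eauto.
Qed.

Lemma valuation_refines {M N : Nmatrix} {v : For -> V8} :
  refines M N -> valuation M v -> valuation N v.
Proof.
  intros [Hdom [Hneg [Hbox Himp]]] [vdom [vneg [vbox vimp]]].
  repeat split; intros; auto.
Qed.

Lemma refines_Tm_Dm : refines M_Tm M_Dm.
Proof.
  unfold refines; simpl; unfold domTm, domDm, boxTm, boxDm, impTm.
  repeat split; intros x; try tauto.
  intros y [->|[->|[->| ->]]]; tauto.
Qed.

Lemma refines_Dm_Km : refines M_Dm M_Km.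
Proof.
  unfold refines; simpl; unfold domDm, domKm, boxDm, boxKm, posV, negV.
  repeat split; intros x; try tauto.
  intros y [->|[->|[->|[->|[->| ->]]]]]; tauto.
Qed.

Theorem mainTheorem20 :
  (forall v : For -> V8, valuation M_Tm v -> valuation M_Dm v /\ valuation M_Km v) /\
  (forall v : For -> V8, valuation M_Dm v -> valuation M_Km v).
Proof.
  split.
  - intros v Hv; split.
    + exact (valuation_refines refines_Tm_Dm Hv).
    + exact (valuation_refines (refines_trans refines_Tm_Dm refines_Dm_Km) Hv).
  - intros v; exact (valuation_refines refines_Dm_Km).
Qed.
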